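(* For every odd integer $n\geq 3$ and every $i\in[1,7]$, there exists a $D_i$-decomposition of $K^*_{n\times 7}$.
   Context: For a simple graph $G$, $G^*$ is the digraph with vertex set $V(G)$ and arc set $\bigcup_{\{x,y\}\in E(G)}\{(x,y),(y,x)\}$. $K_{n\times 7}$ is the complete multipartite simple graph with $n$ parts each of size $7$, and $K^*_{n\times 7}=(K_{n\times 7})^*$. A $D$-decomposition of a digraph $K$ is a set of subdigraphs of $K$, each isomorphic to $D$, such that every arc of $K$ lies in exactly one of them. For distinct vertices $v_0,\dots,v_6$, the digraphs $D_i[v_0,v_1,\dots,v_6]$ ($i\in[1,7]$) all have vertex set $\{v_0,\dots,v_6\}$ and the following arc sets: $D_1$: $(v_1,v_0),(v_1,v_2),(v_2,v_3),(v_3,v_4),(v_4,v_5),(v_5,v_6),(v_6,v_0)$; $D_2$: $(v_1,v_0),(v_2,v_1),(v_2,v_3),(v_3,v_4),(v_4,v_5),(v_5,v_6),(v_6,v_0)$; $D_3$: $(v_1,v_0),(v_1,v_2),(v_3,v_2),(v_3,v_4),(v_4,v_5),(v_5,v_6),(v_6,v_0)$; $D_4$: $(v_1,v_0),(v_1,v_2),(v_2,v_3),(v_4,v_3),(v_4,v_5),(v_5,v_6),(v_6,v_0)$; $D_5$: $(v_1,v_0),(v_2,v_1),(v_3,v_2),(v_3,v_4),(v_4,v_5),(v_5,v_6),(v_6,v_0)$; $D_6$: $(v_1,v_0),(v_2,v_1),(v_2,v_3),(v_3,v_4),(v_5,v_4),(v_5,v_6),(v_6,v_0)$; $D_7$: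 $(v_1,v_0),(v_1,v_2),(v_3,v_2),(v_3,v_4),(v_4,v_5),(v_6,v_5),(v_6,v_0)$. $D_i$ also denotes the isomorphism type of $D_i[v_0,\dots,v_6]$. *)

From mathcomp Require Import all_boot.
Set Implicit Arguments. Unset Strict Implicit. Unset Printing Implicit Defensive.

Definition digraph (V : finType) : Type := ({set V} * {set V * V})%type.
Definition dverts (V : finType) (G : digraph V) : {set V} := G.1.
Definition darcs (V : finType) (G : digraph V) : {set V * V} := G.2.

Definition star (V : finType) (e : rel V) : digraph V :=
  ([set: V], [set a : V * V | e a.1 a.2 || e a.2 a.1]).

(* K_{n x 7}: vertices are (part, index) pairs; x ~ y iff in different parts. *)
Definition Kmult7 (n : nat) : rel ('I_n * 'I_7)%type := fun x y => x.1 != y.1.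
Definition Kstar7 (n : nat) : digraph ('I_n * 'I_7)%type := star (@Kmult7 n).

(* arc lists of D_1..D_7 on vertices v_0..v_6 (encoded by their indices) *)
Definition Darcs_nat (i : nat) : seq (nat * nat) :=
  match i with
  | 1 => [:: (1,0); (1,2); (2,3); (3,4); (4,5); (5,6); (6,0)]
  | 2 => [:: (1,0); (2,1); (2,3); (3,4); (4,5); (5,6); (6,0)]
  | 3 => [:: (1,0); (1,2); (3,2); (3,4); (4,5); (5,6); (6,0)]
  | 4 => [:: (1,0); (1,2); (2,3); (4,3); (4,5); (5,6); (6,0)]
  | 5 => [:: (1,0); (2,1); (3,2); (3,4); (4,5); (5,6); (6,0)]
  | 6 => [:: (1,0); (2,1); (2,3); (3,4); (5,4); (5,6); (6,0)]
  | 7 => [:: (1,0); (1,2); (3,2); (3,4); (4,5); (6,5); (6,0)]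
  | _ => [::]
  end.

Definition Ddig (i : nat) : digraph 'I_7 :=
  ([set: 'I_7], [set a : 'I_7 * 'I_7 | (val a.1, val a.2) \in Darcs_nat i]).

Definition disom (U V : finType) (G : digraph U) (H : digraph V) : Prop :=
  exists f : U -> V,
    {in dverts G &, injective f} /\
    f @: dverts G = dverts H /\
    [set (f a.1, f a.2) | a in darcs G] = darcs H.

Definition subdigraph (V : finType) (H K : digraph V) : Prop :=
  dverts H \subset dverts K /\ darcs H \subset darcs K /\
  {in darcs H, forall a, (a.1 \in dverts H) && (a.2 \in dverts H)}.

Definition decomposition (U V : finType) (D : digraph U) (K : digraph V)
    (P : {set digraph V}) : Prop :=
  (forall H, H \in P -> subdigraph H K /\ disom D H) /\
  (forall a, a \in darcs K -> #|[set H in P | a \in darcs H]| = 1).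

From mathcomp Require Import all_boot ssralg ssrint zmodp zify.
Set Implicit Arguments. Unset Strict Implicit. Unset Printing Implicit Defensive.
Import GRing.Theory.

(* Write n = 2m + 1 and view the vertices of K_{n x 7} as Z_n x Z_7.  With the
   labels c = (0,1,2,0,1,0,1) and e = (0,1,3,3,2,5,3), the 7-cycles
   x |-> g + (j c_x, e_x) for g in Z_n x Z_7 and 1 <= j <= m decompose K_{n x 7}:
   along the 14 arcs of the doubled 7-cycle the differences (j (c_y - c_x), e_y - e_x)
   are (+-j, d) or (+-2j, 0), and as j ranges over 1..m they meet every element of
   Z_n x Z_7 with nonzero first coordinate exactly once, because n is odd.
   Each D_i is an orientation of the 7-cycle that a reflection x |-> r_i - x turns
   into its converse, so D_i and its reflected copy use every arc of C_7^* once.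
   Composing the two arc partitions gives the D_i-decomposition of K*_{n x 7}. *)

Definition arc_map (U V : Type) (f : U -> V) (a : U * U) : V * V := (f a.1, f a.2).

Definition image_digraph (U V : finType) (f : U -> V) (D : digraph U) : digraph V :=
  (f @: dverts D, arc_map f @: darcs D).

Definition arc_partition (T U V : finType) (f : T -> U -> V)
    (D : digraph U) (K : digraph V) : Prop :=
  [/\ forall t, {in darcs D, forall a, arc_map (f t) a \in darcs K},
      forall t t', {in darcs D &, forall a a',
        arc_map (f t) a = arc_map (f t') a' -> t = t' /\ a = a'}
    & {in darcs K, forall e, exists t, exists2 a, a \in darcs D & e = arc_map (f t) a}].

Section ArcPartition.
Variables (T S U W V : finType).

Lemma arc_partition_comp (f : T -> W -> V) (g : S -> U -> W) D C K :
  arc_partition f C K -> arc_partition g D C ->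
  arc_partition (fun p : T * S => f p.1 \o g p.2) D K.
Proof.
case=> fK f_inj f_onto [gC g_inj g_onto]; split.
- by move=> [t s] a Da; exact: (fK t _ (gC s a Da)).
- move=> [t s] [t' s'] a a' Da Da' /= eq_fg.
  have [-> eq_g] := f_inj t t' _ _ (gC s a Da) (gC s' a' Da') eq_fg.
  by have [-> ->] := g_inj s s' a a' Da Da' eq_g.
- move=> e /f_onto[t [c Cc ->]]; have [s [a Da ->]] := g_onto c Cc.
  by exists (t, s), a.
Qed.

Lemma arc_partition_decomposition (f : T -> U -> V) D K :
  arc_partition f D K ->
  (forall t, {in dverts D &, injective (f t)}) ->
  (forall t, f t @: dverts D \subset dverts K) ->
  {in darcs D, forall a, (a.1 \in dverts D) && (a.2 \in dverts D)} ->
  decomposition D K [set image_digraph (f t) D | t : T].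
Proof.
case=> fK f_arc_inj f_onto f_inj f_verts D_wf; split.
  move=> _ /imsetP[t _ ->]; split; last by exists (f t).
  split; first exact: f_verts.
  split; first by apply/subsetP=> _ /imsetP[a Da ->]; apply: fK.
  move=> _ /imsetP[a Da ->]; case/andP: (D_wf a Da) => Da1 Da2.
  by apply/andP; split; apply: imset_f.
move=> e /f_onto[t [a Da ->]]; apply/eqP/cards1P; exists (image_digraph (f t) D).
apply/setP=> H; rewrite !inE; apply/andP/eqP=> [[/imsetP[t' _ ->]] | ->].
  by case/imsetP=> a' Da' /(f_arc_inj _ _ _ _ Da Da')[->].
by split; apply: imset_f.
Qed.

Lemma arc_partition_enum (f : T -> U -> V) D K
    (ts : seq T) (ds : seq (U * U)) (ks : seq (V * V)) :
  (forall t, t \in ts) -> darcs D =i ds -> darcs K =i ks ->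
  [&& allrel (fun t a => arc_map (f t) a \in ks) ts ds,
      allrel (fun p q => (arc_map (f p.1) p.2 == arc_map (f q.1) q.2) ==> (p == q))
        [seq (t, a) | t <- ts, a <- ds] [seq (t, a) | t <- ts, a <- ds]
    & all (fun e => has (fun t => has (fun a => e == arc_map (f t) a) ds) ts) ks] ->
  arc_partition f D K.
Proof.
move=> ts_full Dds Kks /and3P[/allrelP fK /allrelP f_inj /allP f_onto]; split.
- by move=> t a; rewrite Dds Kks; apply: fK.
- move=> t t' a a'; rewrite !Dds => Da Da' eq_f.
  have := f_inj (t, a) (t', a')
    (allpairs_f pair (ts_full t) Da) (allpairs_f pair (ts_full t') Da').
  by rewrite /= eq_f eqxx => /eqP[-> ->].
- move=> e; rewrite Kks => /f_onto/hasP[t _ /hasP[a Da /eqP ->]].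
  by exists t; exists a; rewrite ?Dds.
Qed.

End ArcPartition.

Section SevenCycle.
Local Open Scope ring_scope.

Definition succ7 : rel 'I_7 := fun x y => y == x + 1.
Definition cycle7_star : digraph 'I_7 := star succ7.

(* Unlike [enum 'I_7], this list is built from [Ordinal] constructors, so that
   [vm_compute] can evaluate boolean checks over it. *)
Definition ord7_enum : seq 'I_7 := [seq inZp k | k <- iota 0 7].
Definition ord7_pairs : seq ('I_7 * 'I_7) := [seq (x, y) | x <- ord7_enum, y <- ord7_enum].

Lemma mem_ord7_pairs (a : 'I_7 * 'I_7) : a \in ord7_pairs.
Proof.
have mem_enum (x : 'I_7) : x \in ord7_enum.
  by apply/mapP; exists (val x); rewrite ?valZpK // mem_iota ltn_ord.
by case: a => x y; apply: allpairs_f.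
Qed.

Lemma cycle7_arcsE :
  darcs cycle7_star =i [seq a <- ord7_pairs | succ7 a.1 a.2 || succ7 a.2 a.1].
Proof. by move=> a; rewrite mem_filter mem_ord7_pairs andbT inE. Qed.

Lemma Ddig_arcsE i :
  darcs (Ddig i) =i [seq a <- ord7_pairs | (val a.1, val a.2) \in Darcs_nat i].
Proof. by move=> a; rewrite mem_filter mem_ord7_pairs andbT inE. Qed.

Definition mirror_axis (i : nat) : 'I_7 := inZp (nth 0 [:: 0; 1; 2; 3; 4; 3; 2; 1] i)%N.

Definition mirror_if (i : nat) (b : bool) (x : 'I_7) : 'I_7 :=
  if b then mirror_axis i - x else x.

Lemma mirror_if_inj i b : injective (mirror_if i b).
Proof. by case: b => // x y /addrI/oppr_inj. Qed.

Lemma Ddig_mirror_partition i :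
  (1 <= i <= 7)%N -> arc_partition (mirror_if i) (Ddig i) cycle7_star.
Proof.
move=> i_range.
apply: (arc_partition_enum (ts := [:: false; true]) _ (Ddig_arcsE i) cycle7_arcsE).
  by case.
by case: i i_range => [|[|[|[|[|[|[|[|?]]]]]]]] //; vm_compute.
Qed.

Definition part_coef (x : 'I_7) : int := nth 0 [:: 0; 1; 2; 0; 1; 0; 1] x.
Definition slot_label (x : 'I_7) : 'I_7 := inZp (nth 0 [:: 0; 1; 3; 3; 2; 5; 3] x)%N.
Definition slope (a : 'I_7 * 'I_7) : int := part_coef a.2 - part_coef a.1.
Definition slot_gap (a : 'I_7 * 'I_7) : 'I_7 := slot_label a.2 - slot_label a.1.

Lemma slope_cycle7 : {in darcs cycle7_star, forall a, slope a \in [:: 1; -1; 2; -2]}.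
Proof. by move=> a; rewrite cycle7_arcsE; move: a; apply/allP; vm_compute. Qed.

Lemma slot_gap_cycle7 : {in darcs cycle7_star &, forall a a',
  slot_gap a = slot_gap a' -> (a == a') || (slope a' == - slope a)}.
Proof.
move=> a a'; rewrite !cycle7_arcsE => Ca Ca' /eqP; apply/implyP; move: a a' Ca Ca'.
by apply/allrelP; vm_compute.
Qed.

Lemma slot_label_collision (a : 'I_7 * 'I_7) :
  slot_label a.1 = slot_label a.2 -> (a.1 == a.2) || (slope a \in [:: 1; -1; 2; -2]).
Proof.
move/eqP; apply/implyP; have := mem_ord7_pairs a; move: a.
by apply/allP; vm_compute.
Qed.

End SevenCycle.

Lemma Kstar7_arcsE (p : nat) (e : ('I_p.+1 * 'I_7) * ('I_p.+1 * 'I_7)) :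
  (e \in darcs (Kstar7 p.+1)) = ((e.2 - e.1).1 != 0)%R.
Proof. by rewrite inE /Kmult7 /= subr_eq0 eq_sym orbb. Qed.

Section CycleSystem.
Local Open Scope ring_scope.
Variable m : nat.
Local Notation n := m.*2.+1.
Local Notation V := ('I_n * 'I_7)%type.

Definition step (t : 'I_m) : 'I_n := inZp t.+1.

Lemma val_step t : val (step t) = t.+1.
Proof. by rewrite /= modn_small //; have := ltn_ord t; lia. Qed.

Lemma step_inj : injective step.
Proof. by move=> t t' /(congr1 val); rewrite !val_step => -[/val_inj]. Qed.

Lemma step_neq0 t : step t != 0.
Proof. by rewrite -val_eqE val_step. Qed.

Lemma step_add_neq0 t t' : step t + step t' != 0.
Proof.
move: (ltn_ord t) (ltn_ord t') => lt_t lt_t'.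
by rewrite -val_eqE /= !modn_small //; lia.
Qed.

Lemma mulrn2_eq0 (x : 'I_n) : x *+ 2 = 0 -> x = 0.
Proof.
rewrite Zp_mulrn => /(congr1 val) /= /eqP.
rewrite -/(n %| x * 2) Gauss_dvdl ?coprimen2 /= ?odd_double // /dvdn modn_small //.
by move=> /eqP x_eq0; apply: val_inj.
Qed.

Lemma mulrz_pm12_eq0 (x : 'I_n) (k : int) :
  k \in [:: 1; -1; 2; -2] -> x *~ k = 0 -> x = 0.
Proof.
rewrite !inE => /or4P[] /eqP->;
  rewrite ?mulr1z ?mulrN1z ?mulrNz -?pmulrn => /eqP; rewrite ?oppr_eq0 => /eqP //.
all: exact: mulrn2_eq0.
Qed.

Definition offset (t : 'I_m) (x : 'I_7) : V := (step t *~ part_coef x, slot_label x).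
Definition gap (t : 'I_m) (a : 'I_7 * 'I_7) : V := offset t a.2 - offset t a.1.

Lemma gapE t a : gap t a = (step t *~ slope a, slot_gap a).
Proof. by rewrite /gap /slope mulrzBr. Qed.

Lemma offset_inj t : injective (offset t).
Proof.
move=> x y /eqP; rewrite xpair_eqE => /andP[/eqP eq_part /eqP eq_slot].
case/orP: (slot_label_collision (a := (x, y)) eq_slot) => [/eqP // | slope_xy].
have /eqP := step_neq0 t; case; apply: (mulrz_pm12_eq0 slope_xy).
by rewrite /slope /= mulrzBr eq_part subrr.
Qed.

Lemma gap_neq0 t : {in darcs cycle7_star, forall a, (gap t a).1 != 0}.
Proof.
move=> a Ca; rewrite gapE; apply/eqP => /(mulrz_pm12_eq0 (slope_cycle7 Ca)).
exact/eqP/step_neq0.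
Qed.

Lemma gap_inj t t' : {in darcs cycle7_star &, forall a a',
  gap t a = gap t' a' -> t = t' /\ a = a'}.
Proof.
move=> a a' Ca Ca'; rewrite !gapE => /eqP; rewrite xpair_eqE.
case/andP=> /eqP eq_part /eqP/(slot_gap_cycle7 Ca Ca') /orP[/eqP eq_a | /eqP slope_a'].
  subst a'; split=> //; apply/step_inj/eqP; rewrite -subr_eq0; apply/eqP.
  by apply: (mulrz_pm12_eq0 (slope_cycle7 Ca)); rewrite mulrzBl eq_part subrr.
have /eqP := step_add_neq0 t t'; case; apply: (mulrz_pm12_eq0 (slope_cycle7 Ca)).
by rewrite mulrzDl eq_part slope_a' mulrNz addNr.
Qed.

Lemma card_cycle7_arcs : #|darcs cycle7_star| = 14%N.
Proof.
rewrite (eq_card cycle7_arcsE).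
by have /card_uniqP -> : uniq [seq a <- ord7_pairs | succ7 a.1 a.2 || succ7 a.2 a.1]
  by vm_compute.
Qed.

Lemma gap_onto :
  [set gap p.1 p.2 | p in setX [set: 'I_m] (darcs cycle7_star)] = [set d : V | d.1 != 0].
Proof.
apply/eqP; rewrite eqEcard; apply/andP; split.
  by apply/subsetP=> d /imsetP[[t a] /setXP[_ Ca] ->]; rewrite inE gap_neq0.
rewrite card_in_imset; last first.
  by move=> [t a] [t' a'] /setXP[_ Ca] /setXP[_ Ca'] /= /(gap_inj Ca Ca')[-> ->].
have -> : [set d : V | d.1 != 0] = setX [set~ (0 : 'I_n)] [set: 'I_7].
  by apply/setP=> -[u v]; rewrite !inE andbT.
by rewrite !cardsX cardsC1 !cardsT !card_ord card_cycle7_arcs; lia.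
Qed.

Definition cycle_embed (p : 'I_m * V) (x : 'I_7) : V := p.2 + offset p.1 x.

Lemma cycle_embed_gap p a :
  (arc_map (cycle_embed p) a).2 - (arc_map (cycle_embed p) a).1 = gap p.1 a.
Proof. by rewrite /= /cycle_embed [p.2 + _]addrC addrKA. Qed.

Lemma cycle_system : arc_partition cycle_embed cycle7_star (Kstar7 n).
Proof.
split.
- by move=> p a Ca; rewrite Kstar7_arcsE cycle_embed_gap gap_neq0.
- move=> [t g] [t' g'] a a' Ca Ca' eq_arcs.
  have eq_gap : gap t a = gap t' a'.
    by rewrite -(cycle_embed_gap (t, g)) -(cycle_embed_gap (t', g')) eq_arcs.
  have [eq_t eq_a] := gap_inj Ca Ca' eq_gap; subst t' a'.
  by move/(congr1 fst): eq_arcs => /addIr /= ->.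
- move=> [u v]; rewrite Kstar7_arcsE => uv_gap.
  have : v - u \in [set d : V | d.1 != 0] by rewrite inE.
  rewrite -gap_onto => /imsetP[[t a] /setXP[_ Ca] /= uv_eq].
  exists (t, u - offset t a.1); exists a => //.
  by rewrite /arc_map /cycle_embed /= subrK addrAC -addrA -/(gap t a) -uv_eq subrKC.
Qed.

End CycleSystem.

Theorem corollary1p7 (n i : nat) :
  odd n -> 3 <= n -> 1 <= i <= 7 ->
  exists P : {set digraph ('I_n * 'I_7)%type}, decomposition (Ddig i) (Kstar7 n) P.
Proof.
move=> n_odd _ i_range.
have -> : n = n./2.*2.+1 by rewrite -[LHS]odd_double_half n_odd.
eexists; apply: arc_partition_decomposition.
- exact: arc_partition_comp (cycle_system _) (Ddig_mirror_partition i_range).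
- by move=> [p b] x y _ _ /addrI/offset_inj/mirror_if_inj.
- by move=> t; rewrite subsetT.
- by move=> a _; rewrite !inE.
Qed.
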